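(* Let $\mathtt{r}:[\omega]^2\to\omega$ be a function (writing $\mathtt{r}(k,l)$ for $\mathtt{r}(\{k,l\})$ with $k<l$) such that for all $k<l<m$ in $\omega$: (i) $\mathtt{r}(k,m)\neq\mathtt{r}(l,m)$; (ii) $\mathtt{r}(k,l)\le\max\{\mathtt{r}(k,m),\mathtt{r}(l,m)\}$; (iii) $\mathtt{r}(k,m)\le\max\{\mathtt{r}(k,l),\mathtt{r}(l,m)\}$. Let $X$ be a topological space and $(x_n)_{n\in\omega}$ a sequence of pairwise distinct points of $X$ such that the subspace $\{x_n:n\in\omega\}$ is homeomorphic to $\mathbb{Q}$, and fix a metric $d$ on $\{x_n:n\in\omega\}$ compatible with its subspace topology. Call $A\subseteq\omega$ scattered if there is no $B\subseteq A$ with $\{x_n:n\in B\}$ homeomorphic to $\mathbb{Q}$; let $\mathcal{I}$ be the family of scattered subsets of $\omega$ and $\mathcal{I}^+=\mathcal{P}(\omega)\setminus\mathcal{I}$. For $i,j\in\omega$ let $A_{i,j}=\{n\in\omega: d(x_n,x_i)<\frac{1}{j+1}\}$. Then for every $A\in\mathcal{I}^+$ there exists a nonempty $B\subseteq A$ such that $B$ is $\mathtt{r}$-shift-increasing and for all $i\in B$ and $j\in\omega$ there is $n\in B\cap A_{i,j}$ with $n\neq i$.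
   Context: $[\omega]^2$ is the set of two-element subsets of $\omega$. A set $B\subseteq\omega$ is $\mathtt{r}$-shift-increasing if for all $k,l,m\in B$ with $k<l<m$, $\mathtt{r}(k,l)\le\mathtt{r}(l,m)$. $\mathbb{Q}$ carries its usual topology. *)

From HB Require Import structures.
From mathcomp Require Import all_boot all_order all_algebra.
From mathcomp Require Import all_classical all_reals topology normedtype.
Set Implicit Arguments. Unset Strict Implicit. Unset Printing Implicit Defensive.
Import Order.TTheory GRing.Theory Num.Theory.
Import numFieldNormedType.Exports.
Local Open Scope classical_set_scope.
Local Open Scope ring_scope.

Definition homeomorphic_sub (X Y : topologicalType) (S : set X) (T : set Y) : Prop :=
  exists (f : X -> Y) (g : Y -> X),
    [/\ set_fun S T f, set_fun T S g,
        (forall p, S p -> g (f p) = p),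
        (forall q, T q -> f (g q) = q) &
        ({within S, continuous f} /\ {within T, continuous g})].

Definition ratset (R : realType) : set R := [set t | exists q : rat, t = ratr q].

Definition homeo_Q (R : realType) (X : topologicalType) (S : set X) : Prop :=
  homeomorphic_sub S (@ratset R).

Definition is_metric_on (R : realType) (X : Type) (S : set X) (d : X -> X -> R) : Prop :=
  forall p q s, S p -> S q -> S s ->
    [/\ 0 <= d p q, (d p q = 0 <-> p = q), d p q = d q p &
        d p s <= d p q + d q s].

Definition metric_compatible (R : realType) (X : topologicalType) (S : set X)
    (d : X -> X -> R) : Prop :=
  forall p, S p -> forall U : set X,
    (@nbhs (subspace S) (subspace S) p U <->
     exists2 e : R, 0 < e & [set q | S q /\ d p q < e] `<=` U).

(* r(k,l) for k<l is coded as r k l *)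
Definition shift_increasing (r : nat -> nat -> nat) (B : set nat) : Prop :=
  forall k l m, B k -> B l -> B m -> (k < l < m)%N -> (r k l <= r l m)%N.

Definition scattered (R : realType) (X : topologicalType) (x : nat -> X) (A : set nat) : Prop :=
  ~ exists B : set nat, B `<=` A /\ homeo_Q R (x @` B).

Definition Aij (R : realType) (X : Type) (x : nat -> X) (d : X -> X -> R) (i j : nat) : set nat :=
  [set n | d (x n) (x i) < (j.+1%:R)^-1].

From HB Require Import structures.
From mathcomp Require Import all_boot all_order all_algebra.
From mathcomp Require Import all_classical all_reals topology normedtype.
Import Order.TTheory GRing.Theory Num.Theory.
Import numFieldNormedType.Exports.
Set Implicit Arguments. Unset Strict Implicit. Unset Printing Implicit Defensive.
Local Open Scope classical_set_scope.
Local Open Scope ring_scope.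

(* A copy of Q inside A is crowded for d, so it suffices to find a crowded
   shift-increasing B inside a nonempty crowded subset of A.  B is built point
   by point together with a reservoir S of candidates for its later points: S
   stays non-scattered near every chosen point, and no q in S completes a
   violation, i.e. a triple a < l < q with r(l,q) < r(a,l), of chosen a and l.
   Adding a point l means removing from S the q that violate with l, which must
   keep S non-scattered near all points, l included.  The conditions on r make
   violations rare: on an infinite set of l where r(a,.) is constant the
   violators l of a given q carry distinct colours r(l,q) < r(a,l), and where
   r(a,.) is injective a violation forces r(a,l) = r(a,q); hence some finite
   set of l has no common violating q.  As scattered sets form an ideal, this
   leaves finitely many bad l for each chosen point, and a crowded set always
   contains an l that is not bad for itself. *)

Lemma dependent_choice_inv T (I : T -> Prop) (P : T -> T -> Prop) (x0 : T) :
  I x0 -> (forall x, I x -> exists2 y, I y & P x y) ->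
  exists f : nat -> T, f 0%N = x0 /\ forall k, I (f k) /\ P (f k) (f k.+1).
Proof.
move=> Ix0 step.
have next (x : {x | I x}) : {y : {x | I x} | P (sval x) (sval y)}.
  by have [y Iy Pxy] := cid2 (step _ (svalP x)); exists (exist _ y Iy).
have [f [f0 fP]] := dependent_choice next (exist _ x0 Ix0).
by exists (sval \o f); split=> [|k]; [rewrite /= f0 | split; [exact: svalP | exact: fP]].
Qed.

Lemma count_le_inj (T U : eqType) (p : pred T) (g : T -> U) (s : seq T) (t : seq U) :
  uniq s -> {in [seq y <- s | p y] &, injective g} ->
  (forall y, y \in s -> p y -> g y \in t) -> (count p s <= size t)%N.
Proof.
move=> s_uniq g_inj g_t; rewrite -size_filter -(size_map g).
apply: uniq_leq_size; first by rewrite map_inj_in_uniq ?filter_uniq.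
move=> z /mapP[y]; rewrite mem_filter => /andP[py sy] ->; exact: g_t.
Qed.

Lemma mem_rcons_lt (s : seq nat) l a : a \in rcons s l -> (a < l)%N -> a \in s.
Proof. by rewrite mem_rcons inE => /orP[/eqP->|//]; rewrite ltnn. Qed.

Definition unbounded (L : set nat) := forall N, exists2 l, L l & (N <= l)%N.

Lemma logn2_fiber_unbounded i : unbounded [set k | logn 2 k.+1 = i].
Proof.
move=> N; have pos : (0 < N.*2.+1 * 2 ^ i)%N by rewrite muln_gt0 expn_gt0.
exists (N.*2.+1 * 2 ^ i).-1.
  by rewrite /= prednK // logn_Gauss ?pfactorK // coprime2n /= odd_double.
rewrite -ltnS prednK // (leq_trans _ (leq_pmulr _ (expn_gt0 2 i))) //.
by rewrite ltnS -addnn leq_addr.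
Qed.

Lemma unbounded_uniq_seq L n : unbounded L ->
  exists s, [/\ uniq s, size s = n & forall l, l \in s -> L l].
Proof.
move=> L_unb; elim: n => [|n [s [s_uniq s_size sL]]]; first by exists [::].
have [l Ll ltl] := L_unb (\max_(i <- s) i).+1.
exists (l :: s); split=> /=; last 2 first.
- by rewrite s_size.
- by move=> i; rewrite inE => /orP[/eqP-> //|/sL].
rewrite s_uniq andbT; apply/negP => ls.
by have := leq_trans ltl (@leq_bigmax_seq _ s xpredT id l ls isT); rewrite ltnn.
Qed.

Lemma unbounded_fiber_or_inj (f : nat -> nat) L : unbounded L ->
  (exists w, unbounded (L `&` [set l | f l = w])) \/
  exists L', [/\ L' `<=` L, unbounded L' &
                 forall l l', L' l -> L' l' -> f l = f l' -> l = l'].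
Proof.
move=> L_unb; have [|fibers_bdd] := pselect (exists w, unbounded (L `&` [set l | f l = w])).
  by left.
right; have fiber_bdd w : exists b, forall l, L l -> f l = w -> (l < b)%N.
  apply: contrapT => not_bdd; apply: fibers_bdd; exists w => N.
  apply: contrapT => no_l; apply: not_bdd; exists N => l Ll flw.
  by rewrite ltnNge; apply/negP => Nl; apply: no_l; exists l.
have [b bP] := choice fiber_bdd.
exists [set l | L l /\ forall l', L l' -> (l' < l)%N -> f l' <> f l]; split.
- by move=> l [].
- move=> N; have [l Ll] := L_unb (maxn N (\max_(i < N) b (f i))).
  rewrite geq_max => /andP[Nl bl].
  have Pl : exists m, `[< L m /\ f m = f l >] by exists l; apply/asboolP.
  case: (ex_minnP Pl) => m /asboolP[Lm fm] m_min.
  exists m.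
    split=> // l' Ll' l'm fl'm; have := m_min l'; rewrite fl'm fm.
    by rewrite leqNgt l'm => /(_ (asboolT (conj Ll' erefl))).
  rewrite leqNgt; apply/negP => mN; have := bP _ _ Ll (esym fm).
  rewrite ltnNge (leq_trans _ bl) // fm.
  by have := @leq_bigmax _ (fun i : 'I_N => b (f i)) (Ordinal mN); rewrite /= fm.
- move=> l l' [Ll lmin] [Ll' l'min] fll'.
  case: (ltngtP l l') => // [ll'|l'l]; first by case: (l'min _ Ll ll').
  by case: (lmin _ Ll' l'l).
Qed.

(** * Scattered sets of a metric on [nat] *)

Section Construction.
Variables (R : realType) (D : nat -> nat -> R).
Hypothesis D_metric : is_metric_on setT D.

Let dist_gt0 n m : n <> m -> 0 < D n m.
Proof.
move=> nm; have [D_ge0 [D_eq0 _] _ _] := @D_metric n m m I I I.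
by rewrite lt_neqAle D_ge0 andbT eq_sym; apply/eqP => /D_eq0.
Qed.

Let distxx n : D n n = 0.
Proof. by have [_ [_ D_eq0] _ _] := @D_metric n n n I I I; apply: D_eq0. Qed.

Let distC n m : D n m = D m n.
Proof. by have [_ _ -> _] := @D_metric n m m I I I. Qed.

Let dist_triangle a b c : D a c <= D a b + D b c.
Proof. by have [_ _ _ ->] := @D_metric a b c I I I. Qed.

Definition dball (t : nat) (e : R) := [set n | D n t < e].

Definition crowded (Q : set nat) := forall s, Q s -> forall e, 0 < e ->
  exists n, [/\ Q n, n <> s & D n s < e].

(* By Sierpinski's theorem a countable crowded metric space is homeomorphic
   to Q, so this is the paper's I^+; only the easy direction is needed. *)
Definition nonscattered (S : set nat) :=
  exists Q, [/\ Q `<=` S, Q !=set0 & crowded Q].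

Definition nonscattered_at (t : nat) (S : set nat) :=
  forall e, 0 < e -> nonscattered (S `&` dball t e).

Lemma nonscatteredS S T : S `<=` T -> nonscattered S -> nonscattered T.
Proof. by move=> ST [Q [QS Q0 Qcr]]; exists Q; split=> // n /QS /ST. Qed.

Lemma crowdedI_dball Q s e : crowded Q -> crowded (Q `&` dball s e).
Proof.
move=> Qcr n [Qn dn] eps eps_gt0.
have min_gt0 : 0 < Num.min eps (e - D n s) by rewrite lt_min eps_gt0 subr_gt0.
have [m [Qm mn]] := Qcr n Qn _ min_gt0; rewrite lt_min => /andP[dm_eps dm_e].
exists m; split=> //; split=> //; rewrite /dball /=.
by apply: le_lt_trans (dist_triangle m n s) _; rewrite -ltrBrDr.
Qed.

Lemma crowded_nonscattered_at Q s : crowded Q -> Q s -> nonscattered_at s Q.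
Proof.
move=> Qcr Qs e e_gt0; exists (Q `&` dball s e); split=> //; last exact: crowdedI_dball.
by exists s; split=> //; rewrite /dball /= distxx.
Qed.

Lemma crowdedI_dense Q S : crowded Q ->
  (forall s e, Q s -> 0 < e -> exists n, [/\ Q n, S n & D n s < e]) ->
  crowded (Q `&` S).
Proof.
move=> Qcr S_dense n [Qn Sn] e e_gt0.
have [m [Qm mn dmn]] := Qcr n Qn _ (divr_gt0 e_gt0 (ltr0n _ 2)).
have min_gt0 : 0 < Num.min (e / 2) (D m n) by rewrite lt_min divr_gt0 ?dist_gt0.
have [p [Qp Sp]] := S_dense m _ Qm min_gt0; rewrite lt_min => /andP[dpm dpm_mn].
exists p; split=> //; first by move=> pn; move: dpm_mn; rewrite pn distC ltxx.
by apply: le_lt_trans (dist_triangle p m n) _; rewrite [e]splitr ltrD.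
Qed.

Lemma nonscatteredU S1 S2 :
  nonscattered (S1 `|` S2) -> nonscattered S1 \/ nonscattered S2.
Proof.
case=> Q [QS [s0 Qs0] Qcr].
have [[s [e [Qs e_gt0 noS1]]]|S1_dense] :=
  pselect (exists s e, [/\ Q s, 0 < e & Q `&` dball s e `<=` ~` S1]).
  right; exists (Q `&` dball s e); split; last exact: crowdedI_dball.
    by move=> n Qn; case: (QS n Qn.1) => // /(noS1 n Qn).
  by exists s; split=> //; rewrite /dball /= distxx.
have {}S1_dense s e : Q s -> 0 < e -> exists n, [/\ Q n, S1 n & D n s < e].
  move=> Qs e_gt0; apply: contrapT => no_n; apply: S1_dense; exists s, e.
  by split=> // n [Qn dn] S1n; apply: no_n; exists n.
left; exists (Q `&` S1); split=> //; last exact: crowdedI_dense.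
by have [n [Qn S1n _]] := S1_dense s0 1 Qs0 ltr01; exists n.
Qed.

Lemma nonscattered_set1 n : ~ nonscattered [set n].
Proof.
by case=> Q [Qn [s Qs] Qcr]; have [m [/Qn -> + _]] := Qcr s Qs 1 ltr01; rewrite (Qn s).
Qed.

Lemma nonscattered_lt N : ~ nonscattered [set n | (n < N)%N].
Proof.
elim: N => [|N IH]; first by case=> Q [QS [s /QS]].
move=> ltN1; have ltN1_sub : [set n | (n < N.+1)%N] `<=` [set n | (n < N)%N] `|` [set N].
  by move=> n /=; rewrite ltnS leq_eqVlt => /orP[/eqP|]; [right|left].
by case/nonscatteredU: (nonscatteredS ltN1_sub ltN1) => [/IH|/nonscattered_set1].
Qed.

Lemma nonscatteredD_lt S N :
  nonscattered S -> nonscattered (S `\` [set n | (n < N)%N]).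
Proof.
move=> nsS; have S_sub : S `<=` (S `\` [set n | (n < N)%N]) `|` [set n | (n < N)%N].
  by move=> n Sn; have [|] := pselect (n < N)%N; [right|left].
by case/nonscatteredU: (nonscatteredS S_sub nsS) => [//|/nonscattered_lt].
Qed.

Lemma nonscattered_atS t S T : S `<=` T -> nonscattered_at t S -> nonscattered_at t T.
Proof. by move=> ST St e e_gt0; apply: nonscatteredS (St e e_gt0) => n [/ST]. Qed.

Lemma nonscattered_atD_lt t S N :
  nonscattered_at t S -> nonscattered_at t (S `\` [set n | (n < N)%N]).
Proof.
move=> St e e_gt0; apply: nonscatteredS (nonscatteredD_lt N (St e e_gt0)).
by move=> n [[]].
Qed.

Lemma nonscattered_atU t S1 S2 :
  nonscattered_at t (S1 `|` S2) -> nonscattered_at t S1 \/ nonscattered_at t S2.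
Proof.
move=> S12t; have [|not_S1t] := pselect (nonscattered_at t S1); [by left|right].
have [e1 [e1_gt0 not_S1e1]] : exists e1, 0 < e1 /\ ~ nonscattered (S1 `&` dball t e1).
  apply: contrapT => S1_all; apply: not_S1t => e e_gt0; apply: contrapT => not_e.
  by apply: S1_all; exists e.
move=> e e_gt0; have min_gt0 : 0 < Num.min e e1 by rewrite lt_min e_gt0.
have S12_split : (S1 `|` S2) `&` dball t (Num.min e e1) `<=`
    (S1 `&` dball t e1) `|` (S2 `&` dball t e).
  by move=> n [S12n]; rewrite /dball /= lt_min => /andP[dne dne1]; case: S12n; [left|right].
by case/nonscatteredU: (nonscatteredS S12_split (S12t _ min_gt0)).
Qed.

Lemma nonscattered_at_neq0 t S : nonscattered_at t S -> S !=set0.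
Proof. by move=> /(_ 1 ltr01) [Q [QS [n /QS[Sn _]] _]]; exists n. Qed.

Lemma nonscattered_at_bigcap t S (K : nat -> set nat) (s : seq nat) :
  nonscattered_at t S -> (forall l, l \in s -> ~ nonscattered_at t (S `\` K l)) ->
  nonscattered_at t (S `&` [set q | forall l, l \in s -> K l q]).
Proof.
move=> St; elim: s => [|l s IH] notK.
  by apply: nonscattered_atS St => q Sq; split.
have /IH Kst : forall l', l' \in s -> ~ nonscattered_at t (S `\` K l').
  by move=> l' l's; apply: notK; rewrite inE l's orbT.
have split_l : S `&` [set q | forall l', l' \in s -> K l' q] `<=`
    (S `&` [set q | forall l', l' \in l :: s -> K l' q]) `|` (S `\` K l).
  move=> q [Sq Ksq]; have [Klq|] := pselect (K l q); [left|by right].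
  by split=> // l'; rewrite inE => /orP[/eqP->|/Ksq].
case/nonscattered_atU: (nonscattered_atS split_l Kst) => // /notK.
by rewrite mem_head => /(_ isT).
Qed.

(** * Violations of shift-increasingness *)

Variable r : nat -> nat -> nat.
Hypothesis r_neq : forall k l m, (k < l < m)%N -> r k m <> r l m.
Hypothesis r_inner_le : forall k l m, (k < l < m)%N -> (r k l <= maxn (r k m) (r l m))%N.
Hypothesis r_outer_le : forall k l m, (k < l < m)%N -> (r k m <= maxn (r k l) (r l m))%N.

Definition violates (a l q : nat) : bool := (a < l < q)%N && (r l q < r a l)%N.

Definition violated (F : seq nat) (l q : nat) : bool := has (fun a => violates a l q) F.

Definition violations (F : seq nat) (l : nat) : set nat := [set q | violated F l q].

Lemma violates_r_eq a l q : violates a l q -> r a q = r a l.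
Proof.
case/andP=> alq r_lt; apply/eqP; rewrite eqn_leq.
rewrite (leq_trans (r_outer_le alq)) ?geq_max ?leqnn ?(ltnW r_lt) //=.
by move: (r_inner_le alq); rewrite leq_max [(r a l <= r l q)%N]leqNgt r_lt orbF.
Qed.

Lemma violated_lt F l q : violated F l q -> (l < q)%N.
Proof. by case/hasP=> a _ /andP[/andP[_ ->]]. Qed.

Definition count_bounded (P : nat -> nat -> bool) (L : set nat) (W : nat) :=
  forall q s, uniq s -> (forall l, l \in s -> L l) -> (count (P ^~ q) s <= W)%N.

Lemma violates_count_bounded a L : unbounded L ->
  exists L', [/\ L' `<=` L, unbounded L' & exists W, count_bounded (violates a) L' W].
Proof.
case/(unbounded_fiber_or_inj (r a)) => [[w w_unb]|[L' [L'L L'_unb r_inj]]].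
  exists (L `&` [set l | r a l = w]); split=> [l []//|//|].
  exists w => q s s_uniq sL; rewrite -(size_iota 0 w).
  apply: (count_le_inj (g := r ^~ q)) => // [l l'|l /sL[_ ral] /andP[_ r_lt]].
    rewrite !mem_filter => /andP[/andP[/andP[_ lq] _] _] /andP[/andP[/andP[_ l'q] _] _] e.
    case: (ltngtP l l') => // [ll'|l'l]; first by case: (@r_neq l l' q); rewrite ?ll'.
    by case: (@r_neq l' l q); rewrite ?l'l.
  by rewrite mem_iota add0n -ral.
exists L'; split=> //; exists 1%N => q s s_uniq sL.
have -> : 1%N = size [:: r a q] by [].
apply: (count_le_inj (g := r a)) => // [l l'|l _ /violates_r_eq <-]; last exact: mem_head.
by rewrite !mem_filter => /andP[_ /sL L'l] /andP[_ /sL L'l']; apply: r_inj.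
Qed.

Lemma violated_count_bounded F L : unbounded L ->
  exists L', [/\ L' `<=` L, unbounded L' & exists W, count_bounded (violated F) L' W].
Proof.
elim: F L => [|a F IH] L L_unb.
  by exists L; split=> //; exists 0%N => q s _ _; rewrite count_pred0.
have [L1 [L1L L1_unb [Wa Wa_bound]]] := violates_count_bounded a L_unb.
have [L2 [L2L1 L2_unb [WF WF_bound]]] := IH L1 L1_unb.
exists L2; split=> [l /L2L1 /L1L //|//|]; exists (Wa + WF)%N => q s s_uniq sL2.
rewrite (eq_count (a2 := predU (violates a ^~ q) (violated F ^~ q))) //.
apply: leq_trans (leq_addr (count (predI (violates a ^~ q) (violated F ^~ q)) s) _) _.
rewrite count_predUI leq_add ?WF_bound //.
by apply: Wa_bound => // l /sL2 /L2L1.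
Qed.

Lemma unbounded_not_violated F L : unbounded L ->
  exists s : seq nat,
    (forall l, l \in s -> L l) /\ forall q, exists2 l, l \in s & ~~ violated F l q.
Proof.
move=> /(violated_count_bounded F) [L' [L'L L'_unb [W W_bound]]].
have [s [s_uniq s_size sL']] := unbounded_uniq_seq W.+1 L'_unb.
exists s; split=> [l /sL' /L'L //|q]; apply/hasP; rewrite has_count.
have := count_predC (violated F ^~ q) s; rewrite s_size => count_sum.
have := W_bound q s s_uniq sL'; rewrite -ltnS -count_sum -{1}[count _ _]addn0.
by rewrite ltn_add2l.
Qed.

Lemma no_violated_chain F (l : nat -> nat) :
  ~ (forall k m, (k < m)%N -> violated F (l k) (l m)).
Proof.
move=> l_viol; have l_ge k : (k <= l k)%N.
  by elim: k => // k IH; apply: leq_ltn_trans IH (violated_lt (l_viol _ _ (ltnSn k))).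
have l_unb : unbounded (range l) by move=> N; exists (l N); [exists N | exact: l_ge].
have [s [s_l s_free]] := unbounded_not_violated F l_unb.
have [i i_s not_viol] := s_free (l (\max_(i <- s) i).+1).
have [k _ lk] := s_l i i_s.
have k_lt : (k < (\max_(i <- s) i).+1)%N.
  by rewrite ltnS (leq_trans (l_ge k)) // lk (@leq_bigmax_seq _ s xpredT id i i_s isT).
by rewrite -lk l_viol in not_viol.
Qed.

Definition shift_compatible (F : seq nat) (q : nat) :=
  forall a b, a \in F -> b \in F -> (a < b)%N -> (r a b <= r b q)%N.

Lemma shift_increasing_rcons F l : (forall a, a \in F -> (a < l)%N) ->
  shift_increasing r [set t | t \in F] -> shift_compatible F l ->
  shift_increasing r [set t | t \in rcons F l].
Proof.
move=> F_lt F_inc F_l a b m /= aF bF mF /andP[ab bm].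
move: mF bm; rewrite mem_rcons inE => /orP[/eqP->|mF] bm.
  exact: F_l (mem_rcons_lt aF (ltn_trans ab bm)) (mem_rcons_lt bF bm) ab.
have bl := ltn_trans bm (F_lt m mF).
apply: F_inc; rewrite /= ?ab ?bm //.
exact: mem_rcons_lt aF (ltn_trans ab bl).
exact: mem_rcons_lt bF bl.
Qed.

Lemma shift_compatible_rcons F l q : (forall a, a \in F -> (a < l)%N) -> (l < q)%N ->
  shift_compatible F q -> ~~ violated F l q -> shift_compatible (rcons F l) q.
Proof.
move=> F_lt lq F_q not_viol a b aF; rewrite mem_rcons inE => /orP[/eqP->|bF] ab.
  rewrite leqNgt; apply: contra not_viol => r_lt; apply/hasP.
  by exists a; [exact: mem_rcons_lt ab | rewrite /violates ab lq].
by apply: F_q => //; apply: mem_rcons_lt aF (ltn_trans ab (F_lt b bF)).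
Qed.

Lemma nonscattered_at_avoid_violations F S t : nonscattered_at t S ->
  exists N, forall l, (N <= l)%N -> nonscattered_at t (S `\` violations F l).
Proof.
move=> St; apply: contrapT => no_N.
have bad_unb : unbounded [set l | ~ nonscattered_at t (S `\` violations F l)].
  move=> N; apply: contrapT => no_l; apply: no_N; exists N => l Nl.
  by apply: contrapT => not_St; apply: no_l; exists l.
have [s [s_bad s_free]] := unbounded_not_violated F bad_unb.
have [q [_ q_viol]] := nonscattered_at_neq0 (nonscattered_at_bigcap St s_bad).
by have [l /q_viol ls] := s_free q; rewrite ls.
Qed.

Lemma nonscattered_at_avoid_violations_seq F S (T : seq nat) :
  (forall t, t \in T -> nonscattered_at t S) ->
  exists N, forall l, (N <= l)%N ->
    forall t, t \in T -> nonscattered_at t (S `\` violations F l).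
Proof.
elim: T => [|t T IH] T_S; first by exists 0%N.
have [N1 N1P] := nonscattered_at_avoid_violations F (T_S t (mem_head t T)).
have [N2 N2P] := IH (fun t' t'T => T_S t' (@mem_behead _ (t :: T) _ t'T)).
exists (maxn N1 N2) => l; rewrite geq_max => /andP[N1l N2l] t'.
by rewrite inE => /orP[/eqP->|]; [exact: N1P | exact: N2P].
Qed.

Lemma crowded_shrink_violations F S Z l : Z `<=` S -> crowded Z -> Z l ->
  ~ nonscattered_at l (S `\` violations F l) ->
  exists Z', [/\ Z' `<=` Z `&` violations F l, Z' !=set0 & crowded Z'].
Proof.
move=> ZS Zcr Zl not_Sl.
have [e [e_gt0 not_Se]] :
    exists e, 0 < e /\ ~ nonscattered ((S `\` violations F l) `&` dball l e).
  apply: contrapT => Se; apply: not_Sl => e e_gt0; apply: contrapT => not_e.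
  by apply: Se; exists e.
have Z_split : Z `&` dball l e `<=`
    (Z `&` violations F l) `|` ((S `\` violations F l) `&` dball l e).
  move=> q [Zq dq]; have [|] := pselect (violations F l q); [left|right] => //.
  by split=> //; split=> //; apply: ZS.
by case/nonscatteredU: (nonscatteredS Z_split (crowded_nonscattered_at Zcr Zl e_gt0)).
Qed.

Lemma crowded_self_avoiding F S Q : Q `<=` S -> Q !=set0 -> crowded Q ->
  exists2 l, Q l & nonscattered_at l (S `\` violations F l).
Proof.
move=> QS [l0 Ql0] Qcr; apply: contrapT => no_l.
pose I (lZ : nat * set nat) := [/\ lZ.2 lZ.1, lZ.2 `<=` Q & crowded lZ.2].
pose P (lZ lZ' : nat * set nat) := lZ'.2 `<=` lZ.2 `&` violations F lZ.1.
have I0 : I (l0, Q) by split.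
have step lZ : I lZ -> exists2 lZ', I lZ' & P lZ lZ'.
  case: lZ => l Z [/= Zl ZQ Zcr].
  have not_l : ~ nonscattered_at l (S `\` violations F l).
    by move=> lS; apply: no_l; exists l; first exact: ZQ.
  have ZS : Z `<=` S := subset_trans ZQ QS.
  have [Z' [Z'Z [l' Z'l'] Z'cr]] := crowded_shrink_violations ZS Zcr Zl not_l.
  exists (l', Z') => //; split=> //= q /Z'Z [Zq _]; exact: ZQ.
have [f [_ fP]] := dependent_choice_inv I0 step.
pose l k := (f k).1; pose Z k := (f k).2.
have Z_dec k m : (k <= m)%N -> Z m `<=` Z k.
  move=> /subnKC <-; elim: (m - k)%N => [|j IH]; first by rewrite addn0.
  by rewrite addnS => q /(proj2 (fP _)) [/IH].
apply: (@no_violated_chain F l) => k m km.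
by have [/(Z_dec _ _ km) /(proj2 (fP k)) []] := proj1 (fP m).
Qed.

(* F lists the points of B chosen so far, S the candidates for later ones. *)
Record admissible (A : set nat) (F : seq nat) (S : set nat) : Prop := Admissible {
  admissible_memA : forall t, t \in F -> A t;
  admissible_subA : S `<=` A;
  admissible_at : forall t, t \in F -> nonscattered_at t S;
  admissible_gt : forall q a, S q -> a \in F -> (a < q)%N;
  admissible_compatible : forall q, S q -> shift_compatible F q;
  admissible_inc : shift_increasing r [set t | t \in F] }.

Lemma admissible1 A Q l : Q `<=` A -> crowded Q -> Q l ->
  admissible A [:: l] (Q `\` [set n | (n < l.+1)%N]).
Proof.
move=> QA Qcr Ql; split.
- by move=> t; rewrite inE => /eqP->; apply: QA.
- by move=> q [/QA].
- move=> t; rewrite inE => /eqP->.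
  exact: nonscattered_atD_lt (crowded_nonscattered_at Qcr Ql).
- by move=> q a [_ /negP]; rewrite -leqNgt inE => lq /eqP->.
- by move=> q _ a b; rewrite !inE => /eqP-> /eqP->; rewrite ltnn.
- by move=> a b c /=; rewrite !inE => /eqP-> /eqP->; rewrite ltnn.
Qed.

Lemma admissible_step A F S t e : admissible A F S -> t \in F -> 0 < e ->
  exists l S', [/\ admissible A (rcons F l) S', l <> t & D l t < e].
Proof.
case=> FA SA F_at F_lt F_comp F_inc tF e_gt0.
have [N N_at] := nonscattered_at_avoid_violations_seq F F_at.
have [Q [QS Q0 Qcr]] := nonscatteredD_lt (maxn N t.+1) (F_at t tF e e_gt0).
have [l Ql l_at] := crowded_self_avoiding F (fun q Qq => (QS q Qq).1.1) Q0 Qcr.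
have [[Sl dlt] /negP] := QS l Ql; rewrite -leqNgt geq_max => /andP[Nl tl].
pose S' := (S `\` violations F l) `\` [set n | (n < l.+1)%N].
have S'S q : S' q -> S q by case=> [[]].
have S'_gt q : S' q -> (l < q)%N by case=> _ /negP; rewrite -leqNgt.
have F_l a : a \in F -> (a < l)%N by apply: F_lt.
exists l, S'; split=> //; last by move=> lt; rewrite lt ltnn in tl.
split.
- by move=> a; rewrite mem_rcons inE => /orP[/eqP->|/FA//]; apply: SA.
- by move=> q /S'S /SA.
- move=> a; rewrite mem_rcons inE => /orP[/eqP->|aF]; apply: nonscattered_atD_lt.
    exact: l_at.
  exact: N_at.
- move=> q a S'q; rewrite mem_rcons inE => /orP[/eqP->|aF]; first exact: S'_gt.
  exact: ltn_trans (F_l a aF) (S'_gt q S'q).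
- move=> q S'q; have [[Sq not_viol] _] := S'q.
  by apply: shift_compatible_rcons (S'_gt q S'q) (F_comp q Sq) _ => //; apply/negP.
- exact: shift_increasing_rcons F_l F_inc (F_comp l Sl).
Qed.

Lemma admissible_chain A Q : Q `<=` A -> Q !=set0 -> crowded Q ->
  exists (pts : nat -> nat) (S : nat -> set nat), forall k,
    [/\ admissible A (mkseq pts k.+1) (S k), pts k.+1 <> pts (logn 2 k.+1) &
        D (pts k.+1) (pts (logn 2 k.+1)) < k.+1%:R^-1].
Proof.
move=> QA [l0 Ql0] Qcr.
(* step k approximates point number logn 2 k.+1 within 1/(k+1): each point
   is targeted infinitely often, with ever better precision *)
pose target (F : seq nat) := nth 0%N F (logn 2 (size F)).
pose I (FS : seq nat * set nat) := admissible A FS.1 FS.2 /\ (0 < size FS.1)%N.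
pose P (FS FS' : seq nat * set nat) := exists l,
  [/\ FS'.1 = rcons FS.1 l, l <> target FS.1 & D l (target FS.1) < (size FS.1)%:R^-1].
have I0 : I ([:: l0], Q `\` [set n | (n < l0.+1)%N]) by split; first exact: admissible1.
have step FS : I FS -> exists2 FS', I FS' & P FS FS'.
  case: FS => F S [FS_adm F_gt0] /=.
  have tF : target F \in F by rewrite mem_nth // ltn_logl.
  have e_gt0 : 0 < (size F)%:R^-1 :> R by rewrite invr_gt0 ltr0n.
  have [l [S' [FS'_adm l_neq dl]]] := admissible_step FS_adm tF e_gt0.
  by exists (rcons F l, S'); [split; rewrite ?size_rcons | exists l].
have [f [f0 fP]] := dependent_choice_inv I0 step.
pose pts k := last 0%N (f k).1.
have f_pts k : (f k).1 = mkseq pts k.+1.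
  elim: k => [|k IH]; first by rewrite /mkseq /= /pts f0.
  have [l [fk1 _ _]] := (fP k).2.
  by rewrite mkseqS -IH /pts fk1 last_rcons.
exists pts, (fun k => (f k).2) => k; rewrite -f_pts.
have [l [fk1 l_neq dl]] := (fP k).2.
have pts_k1 : pts k.+1 = l by rewrite /pts fk1 last_rcons.
have target_f : target (f k).1 = pts (logn 2 k.+1).
  by rewrite /target f_pts size_mkseq nth_mkseq // ltn_logl.
rewrite target_f f_pts size_mkseq -pts_k1 in l_neq dl.
by split=> //; case: (fP k).1.
Qed.

Lemma crowded_shift_increasing_subset A Q : Q `<=` A -> Q !=set0 -> crowded Q ->
  exists B, [/\ B !=set0, B `<=` A, crowded B & shift_increasing r B].
Proof.
move=> QA Q0 Qcr; have [pts [S chain]] := admissible_chain QA Q0 Qcr.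
have pts_mem i k : (i <= k)%N -> pts i \in mkseq pts k.+1.
  by move=> ik; apply: map_f; rewrite mem_iota.
exists (range pts); split.
- by exists (pts 0%N), 0%N.
- by move=> _ [k _ <-]; have [/admissible_memA + _ _] := chain k; apply; apply: pts_mem.
- move=> _ [i _ <-] e e_gt0.
  have [j] := ltr_add_invr e_gt0; rewrite add0r => j_e.
  have [k /= ik jk] := logn2_fiber_unbounded i j.
  have [_] := chain k; rewrite ik => pts_neq pts_near.
  exists (pts k.+1); split=> //; first by exists k.+1.
  rewrite (lt_le_trans pts_near) // (le_trans _ (ltW j_e)) //.
  by rewrite lef_pV2 ?posrE ?ltr0n // ler_nat ltnS.
- move=> _ _ _ [a _ <-] [b _ <-] [c _ <-].
  have [/admissible_inc abc_inc _ _] := chain (maxn a (maxn b c)).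
  apply: abc_inc; apply: pts_mem.
  + exact: leq_maxl.
  + by rewrite (leq_trans (leq_maxl b c)) // leq_maxr.
  + by rewrite (leq_trans (leq_maxr b c)) // leq_maxr.
Qed.

End Construction.

(** * Copies of Q *)

Lemma is_metric_on_comp (R : realType) (X : Type) (x : nat -> X) (d : X -> X -> R) :
  injective x -> is_metric_on (range x) d -> is_metric_on setT (fun n m => d (x n) (x m)).
Proof.
move=> x_inj d_metric n m k _ _ _.
have [d_ge0 [d_eq0 d_eq0P] dC d_tri] := @d_metric _ _ _ (imageT x n) (imageT x m) (imageT x k).
by split=> //; split=> [/d_eq0/x_inj//|nm]; apply: d_eq0P; rewrite nm.
Qed.

Lemma homeo_Q_neq0 (R : realType) (X : topologicalType) (S : set X) :
  homeo_Q R S -> S !=set0.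
Proof. by case=> f [g [_ gT _ _ _]]; exists (g (ratr 0)); apply: gT; exists 0. Qed.

Lemma homeo_Q_no_isolated (R : realType) (X : topologicalType) (S : set X) p U :
  homeo_Q R S -> S p -> nbhs p U -> exists q, [/\ S q, q <> p & U q].
Proof.
case=> f [g [fS gT gf fg [_ g_cont]]] Sp Up.
have fp_rat : @ratset R (f p) := fS p Sp.
have := (subspace_continuousP _ g).1 g_cont (f p) fp_rat U; rewrite gf // => /(_ Up).
rewrite /= nbhs_simpl /= => /nbhs_ballP [del del_gt0 del_U].
have /rat_in_itvoo[q /itvP q_itv] : f p < f p + del by rewrite ltrDl.
have q_rat : @ratset R (ratr q) by exists q.
have q_ball : ball (f p) del (ratr q).
  rewrite /ball /= distrC ltr_distl q_itv andbT.
  by rewrite (@le_lt_trans _ _ (f p)) ?q_itv // lerBlDl lerDr ltW.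
exists (g (ratr q)); split; [exact: gT | | exact: del_U].
move=> gq; have := fg _ q_rat; rewrite gq => fp_q.
have : f p < ratr q by rewrite q_itv.
by rewrite fp_q ltxx.
Qed.

Lemma metric_compatible_nbhs (R : realType) (X : topologicalType) (S : set X)
    (d : X -> X -> R) p e :
  metric_compatible S d -> S p -> 0 < e ->
  exists2 V, nbhs p V & forall q, S q -> V q -> d p q < e.
Proof.
move=> d_comp Sp e_gt0.
have : nbhs (p : subspace S) [set q | S q /\ d p q < e] by apply/(d_comp p Sp); exists e.
rewrite /nbhs /= -nbhs_subspace_in // => S_ball.
by exists [set q | S q -> S q /\ d p q < e] => // q Sq /(_ Sq)[].
Qed.

Lemma homeo_Q_crowded (R : realType) (X : topologicalType) (x : nat -> X)
    (d : X -> X -> R) (B : set nat) :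
  is_metric_on (range x) d -> metric_compatible (range x) d -> homeo_Q R (x @` B) ->
  crowded (fun n m => d (x n) (x m)) B.
Proof.
move=> d_metric d_comp B_Q i Bi e e_gt0.
have [V V_nbhs V_d] := metric_compatible_nbhs d_comp (imageT x i) e_gt0.
have [_ [[n Bn <-] xn_neq Vxn]] := homeo_Q_no_isolated B_Q (imageP x Bi) V_nbhs.
exists n; split=> //; first by move=> ni; apply: xn_neq; rewrite ni.
have [_ _ -> _] := @d_metric _ _ _ (imageT x n) (imageT x i) (imageT x i).
exact: V_d (imageT x n) Vxn.
Qed.

Theorem mainTheorem2 (R : realType) (r : nat -> nat -> nat)
  (hi : forall k l m, (k < l < m)%N -> r k m <> r l m)
  (hii : forall k l m, (k < l < m)%N -> (r k l <= maxn (r k m) (r l m))%N)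
  (hiii : forall k l m, (k < l < m)%N -> (r k m <= maxn (r k l) (r l m))%N)
  (X : topologicalType) (x : nat -> X) (xinj : injective x)
  (hQ : homeo_Q R (range x))
  (d : X -> X -> R) (dmet : is_metric_on (range x) d)
  (dcomp : metric_compatible (range x) d)
  (A : set nat) (hA : ~ scattered R x A) :
  exists B : set nat,
    [/\ B !=set0, B `<=` A, shift_increasing r B &
        forall i j, B i -> exists n, [/\ B n, Aij x d i j n & n <> i]].
Proof.
have [B0 [B0A B0_Q]] := contrapT hA.
have [_ [i B0i _]] := homeo_Q_neq0 B0_Q.
have [B [B_neq0 BA B_cr B_inc]] :=
  crowded_shift_increasing_subset (is_metric_on_comp xinj dmet) hi hii hiii B0A
    (ex_intro _ i B0i) (homeo_Q_crowded dmet dcomp B0_Q).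
exists B; split=> // k j Bk.
have [n [Bn nk dn]] := B_cr k Bk j.+1%:R^-1 ltac:(by rewrite invr_gt0 ltr0n).
by exists n.
Qed.
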